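(* Let $F$ be a finite field, $m,n\ge1$, $T\in M_m(F)$, $S=\langle a_0,\dots,a_{n-1}\rangle\in F^n$, and let $f_T(\lambda)=\det(\lambda I_m-T)$, $f_S(\lambda)=a_0+a_1\lambda+\dots+a_{n-1}\lambda^{n-1}$. Let $f_{\langle T,S\rangle}(\lambda)=\sum_{i=0}^m c_i\lambda^{ni}f_S(\lambda)^{m-i}$, where $f_T=\sum_{i=0}^m c_i\lambda^i$ (this is the characteristic polynomial of the TSR step matrix $[\langle T,S\rangle]$). If $f_T$ is reducible over $F$, then $f_{\langle T,S\rangle}$ is reducible over $F$.
   Context: A polynomial over $F$ is reducible if it is a product of two polynomials of positive degree over $F$. *)

From HB Require Import structures.
From mathcomp Require Import all_boot all_order all_algebra.
Set Implicit Arguments. Unset Strict Implicit. Unset Printing Implicit Defensive.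
Import GRing.Theory.
Local Open Scope ring_scope.

(* A polynomial over F is reducible if it is a product of two polynomials of
   positive degree over F (degree = size - 1, so positive degree <-> 1 < size). *)
Definition reducible_poly (F : fieldType) (p : {poly F}) : Prop :=
  exists q r : {poly F}, (1 < size q)%N /\ (1 < size r)%N /\ p = q * r.

Definition f_S (F : fieldType) (n : nat) (S : 'rV[F]_n) : {poly F} :=
  \sum_(j < n) S 0 j *: 'X^j.

Definition f_TS (F : fieldType) (m n : nat) (T : 'M[F]_m) (S : 'rV[F]_n) : {poly F} :=
  \sum_(i < m.+1) (char_poly T)`_i *: ('X^(n * i) * f_S S ^+ (m - i)).

From HB Require Import structures.
From mathcomp Require Import all_boot all_order all_algebra.
From mathcomp Require Import zify.

Set Implicit Arguments.
Unset Strict Implicit.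
Unset Printing Implicit Defensive.

Import GRing.Theory.
Local Open Scope ring_scope.

(* f_<T,S> is the homogenization of f_T evaluated at (X^n, f_S): writing
   H_d(p)(Y, B) = sum_i p_i Y^i B^(d-i), we have f_<T,S> = H_m(f_T)(X^n, f_S).
   Homogenization is multiplicative, H_(k+l)(g h) = H_k(g) H_l(h), so a
   factorization f_T = g h yields f_<T,S> = H_k(g)(X^n, f_S) * H_l(h)(X^n, f_S).
   Since deg f_S < n, the term g_k X^(n k) dominates H_k(g)(X^n, f_S), which
   therefore has degree n k > 0. *)

Section Homogenization.
Variables (R : comNzRingType) (A : comAlgType R) (y b : A).

Definition homog (d : nat) (p : {poly R}) : A :=
  \sum_(i < d.+1) p`_i *: (y ^+ i * b ^+ (d - i)).

Lemma homogD d : {morph homog d : p q / p + q}.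
Proof.
move=> p q; rewrite /homog -big_split.
by apply: eq_bigr => i _; rewrite coefD scalerDl.
Qed.

Lemma homog0 d : homog d 0 = 0.
Proof. by rewrite /homog big1 // => i _; rewrite coef0 scale0r. Qed.

Lemma homog_sum d (I : Type) (r : seq I) (G : I -> {poly R}) :
  homog d (\sum_(i <- r) G i) = \sum_(i <- r) homog d (G i).
Proof. exact: (big_morph (homog d) (homogD d) (homog0 d)). Qed.

Lemma homogZ d c p : homog d (c *: p) = c *: homog d p.
Proof.
by rewrite /homog scaler_sumr; apply: eq_bigr => i _; rewrite coefZ scalerA.
Qed.

Lemma homogXn d i : (i <= d)%N -> homog d 'X^i = y ^+ i * b ^+ (d - i).
Proof.
move=> le_id; rewrite /homog (bigD1 (Ordinal (le_id : (i < d.+1)%N))) //=.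
rewrite coefXn eqxx.
rewrite scale1r big1 ?addr0 // => j; rewrite -val_eqE /= => /negbTE ne_ji.
by rewrite coefXn ne_ji scale0r.
Qed.

Lemma poly_expand_leq {d : nat} {p : {poly R}} :
  (size p <= d)%N -> p = \sum_(i < d) p`_i *: 'X^i.
Proof. by move=> le_pd; rewrite -poly_def -/(take_poly d p) take_poly_id. Qed.

Lemma homogM k l (g h : {poly R}) : (size g <= k.+1)%N -> (size h <= l.+1)%N ->
  homog (k + l) (g * h) = homog k g * homog l h.
Proof.
move=> le_gk le_hl.
rewrite {1}(poly_expand_leq le_gk) {1}(poly_expand_leq le_hl).
rewrite mulr_suml homog_sum mulr_suml; apply: eq_bigr => i _.
rewrite mulr_sumr homog_sum mulr_sumr; apply: eq_bigr => j _.
have [lt_ik lt_jl] := (ltn_ord i, ltn_ord j).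
rewrite -scalerAr -scalerAl scalerA homogZ -exprD homogXn; last by lia.
rewrite -scalerAr -scalerAl scalerA; congr (_ *: _).
have -> : (k + l - (i + j) = (k - i) + (l - j))%N by lia.
by rewrite !exprD mulrACA.
Qed.

End Homogenization.

Section HomogenizationAtXn.
Variables (F : fieldType) (n : nat) (b : {poly F}).
Hypotheses (n_gt0 : (0 < n)%N) (size_b : (size b <= n)%N).

Lemma size_homogXn d (p : {poly F}) :
  size p = d.+1 -> size (homog 'X^n b d p) = (n * d).+1.
Proof.
move=> size_p; rewrite /homog big_ord_recr /= subnn expr0 mulr1 -exprM.
have : lead_coef p != 0 by rewrite lead_coef_eq0 -size_poly_eq0 size_p.
rewrite lead_coefE size_p /= => lead_p.
rewrite addrC size_polyDl size_scale // size_polyXn // ltnS.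
apply: leq_trans (size_sum _ _ _) _; apply/bigmax_leqP => i _.
apply: leq_trans (size_scale_leq _ _) _; apply: leq_trans (size_polyMleq _ _) _.
rewrite -exprM size_polyXn addSn /=.
have e_gt0 : (0 < d - i)%N by rewrite subn_gt0.
have le_bd : (size (b ^+ (d - i)) <= ((size b).-1 * (d - i)).+1)%N.
  exact: size_poly_exp_leq.
have le_bn : ((size b).-1 * (d - i) <= n.-1 * (d - i))%N by apply: leq_mul; lia.
have -> : (n * d = n * i + n.-1 * (d - i) + (d - i))%N.
  by rewrite -addnA -mulSnr prednK // -mulnDr subnKC // ltnW.
by rewrite -addnA leq_add2l (leq_trans le_bd) // -addn1 leq_add.
Qed.

Lemma homogXn_reducible (p : {poly F}) :
  reducible_poly p -> reducible_poly (homog 'X^n b (size p).-1 p).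
Proof.
move=> [g [h [size_g [size_h ->]]]].
have [k size_gk] : exists k, size g = k.+1 by exists (size g).-1; lia.
have [l size_hl] : exists l, size h = l.+1 by exists (size h).-1; lia.
have [g0 h0] : g != 0 /\ h != 0 by rewrite -!size_poly_eq0 size_gk size_hl.
rewrite size_mul // size_gk size_hl addSn /= addnS homogM ?size_gk ?size_hl //.
exists (homog 'X^n b k g), (homog 'X^n b l h).
rewrite !size_homogXn // !ltnS !muln_gt0 n_gt0 /=.
by split; [rewrite -ltnS -size_gk | split; [rewrite -ltnS -size_hl |]].
Qed.

End HomogenizationAtXn.

Lemma size_f_S (F : fieldType) (n : nat) (S : 'rV[F]_n) : (size (f_S S) <= n)%N.
Proof.
apply: leq_trans (size_sum _ _ _) _; apply/bigmax_leqP => j _.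
by apply: leq_trans (size_scale_leq _ _) _; rewrite size_polyXn.
Qed.

Lemma f_TS_homog (F : fieldType) (m n : nat) (T : 'M[F]_m) (S : 'rV[F]_n) :
  f_TS T S = homog 'X^n (f_S S) m (char_poly T).
Proof. by apply: eq_bigr => i _; rewrite exprM. Qed.

Theorem mainTheorem2 (F : finFieldType) (m n : nat) (T : 'M[F]_m) (S : 'rV[F]_n) :
  (0 < m)%N -> (0 < n)%N ->
  reducible_poly (char_poly T) -> reducible_poly (f_TS T S).
Proof.
move=> _ n_gt0 red_T; rewrite f_TS_homog.
by have := homogXn_reducible n_gt0 (size_f_S S) red_T; rewrite size_char_poly.
Qed.
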